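(* Let $G$ be a group and $P,Q\in G$, and put $A=PQ$. Call a finite sequence $P_0,P_1,\dots,P_m$ ($m\ge 1$) of elements of $G$ a chain if $P_i\neq P_{i+1}$ and $P_i\neq P_{i+2}$ whenever these indices are in range, and $\{P_iP_{i+1},P_{i+1}P_i\}=\{P_0P_1,P_1P_0\}$ for all $0\le i<m$. Then: (a) if $m\ge 3$ and $P_0,\dots,P_m$ is a chain with $P_0=P$, $P_1=Q$, then (1) $PQ\neq QP$, (2) $PQ^2=Q^2P$, (3) $P^2Q=QP^2$, and for all $0\le i\le m$, $P_i=A^{-i/2}PA^{i/2}$ and $P_i^2=P^2$ if $i$ is even, while $P_i=A^{-(i-1)/2}QA^{(i-1)/2}$ and $P_i^2=Q^2$ if $i$ is odd; (b) conversely, if $P,Q$ satisfy (1), (2), (3), then for every $m\ge 3$ the sequence defined by $P_i=A^{-i/2}PA^{i/2}$ ($i$ even), $P_i=A^{-(i-1)/2}QA^{(i-1)/2}$ ($i$ odd), $0\le i\le m$, is a chain with $P_0=P$, $P_1=Q$, and its terms satisfy $P_i^2=P^2$ for $i$ even and $P_i^2=Q^2$ for $i$ odd.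
   Context: In the group cograph of $G$, the points are the elements of $G$ and the edge joining distinct $P,Q$ is $\{PQ,QP\}$; a chain is thus a sequence of points in which consecutive pairs are all joined by the same edge. *)

From Stdlib Require Import Arith.

Record group := Group {
  carrier :> Type;
  gmul : carrier -> carrier -> carrier;
  gone : carrier;
  ginv : carrier -> carrier;
  gmulA : forall x y z, gmul x (gmul y z) = gmul (gmul x y) z;
  gmul1l : forall x, gmul gone x = x;
  gmulVl : forall x, gmul (ginv x) x = gone
}.

Arguments gmul {g} _ _.
Arguments gone {g}.
Arguments ginv {g} _.

Fixpoint gpow {G : group} (x : G) (n : nat) : G :=
  match n with
  | O => gone
  | S k => gmul x (gpow x k)
  end.

Definition conjpow {G : group} (A X : G) (k : nat) : G :=
  gmul (ginv (gpow A k)) (gmul X (gpow A k)).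

Definition pair_eq {G : group} (a b c d : G) : Prop :=
  (a = c \/ a = d) /\ (b = c \/ b = d) /\ (c = a \/ c = b) /\ (d = a \/ d = b).

Definition is_chain {G : group} (m : nat) (S : nat -> G) : Prop :=
  1 <= m /\
  (forall i, i + 1 <= m -> S i <> S (i + 1)) /\
  (forall i, i + 2 <= m -> S i <> S (i + 2)) /\
  (forall i, i < m ->
     pair_eq (gmul (S i) (S (i + 1))) (gmul (S (i + 1)) (S i))
             (gmul (S 0) (S 1)) (gmul (S 1) (S 0))).

Definition std_seq {G : group} (P Q : G) (i : nat) : G :=
  if Nat.even i then conjpow (gmul P Q) P (i / 2)
  else conjpow (gmul P Q) Q ((i - 1) / 2).

From Stdlib Require Import Arith Lia.

(* With A = PQ and B = QP: along a chain an edge {A, B} cannot reverse its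
   orientation, since P_{i+1} P_{i+2} = P_{i+1} P_i would force P_{i+2} = P_i.
   So once PQ <> QP, every step satisfies P_i P_{i+1} = A and P_{i+1} P_i = B.
   The first identity says P_{i+1} = P_i^{-1} A, which determines the chain and
   is satisfied by the conjugates A^{-k} P A^k, A^{-k} Q A^k; the second says
   A P_i = P_i B, which at i = 1 is P Q^2 = Q^2 P and at i = 2 then becomes
   P^2 Q = Q P^2.  Conversely, these two relations make A and B commute, which
   keeps P_{i+1} P_i = B along the conjugated sequence. *)


Local Infix "·" := gmul (at level 40, left associativity).
Local Notation "x ⁻¹" := (ginv x) (at level 2, left associativity, format "x ⁻¹").

Definition gcommute {G : group} (x y : G) : Prop := x · y = y · x.

Section GroupLaws.
Context {G : group}.
Implicit Types a x y : G.

Lemma gmulV x : x · x⁻¹ = gone.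
Proof.
  rewrite <- (gmul1l _ (x · x⁻¹)), <- (gmulVl _ x⁻¹) at 1.
  rewrite <- gmulA, (gmulA _ x⁻¹ x x⁻¹), gmulVl, gmul1l, gmulVl.
  reflexivity.
Qed.

Lemma gmul1r x : x · gone = x.
Proof. rewrite <- (gmulVl _ x), gmulA, gmulV, gmul1l. reflexivity. Qed.

Lemma gmulK x y : y · x · x⁻¹ = y.
Proof. rewrite <- gmulA, gmulV, gmul1r. reflexivity. Qed.

Lemma gmulKV x y : y · x⁻¹ · x = y.
Proof. rewrite <- gmulA, gmulVl, gmul1r. reflexivity. Qed.

Lemma gmul_cancel_l a x y : a · x = a · y -> x = y.
Proof.
  intro h. rewrite <- (gmul1l _ x), <- (gmul1l _ y), <- (gmulVl _ a), <- !gmulA, h.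
  reflexivity.
Qed.

Lemma ginv_unique x y : x · y = gone -> x⁻¹ = y.
Proof. intro h. apply (gmul_cancel_l x). rewrite gmulV, h. reflexivity. Qed.

Lemma ginvM x y : (x · y)⁻¹ = y⁻¹ · x⁻¹.
Proof. apply ginv_unique. rewrite !gmulA, gmulK, gmulV. reflexivity. Qed.

Lemma ginvK x : x⁻¹⁻¹ = x.
Proof. apply ginv_unique, gmulVl. Qed.

Lemma ginv1 : (gone : G)⁻¹ = gone.
Proof. apply ginv_unique, gmul1l. Qed.

Lemma gpow2 x : gpow x 2 = x · x.
Proof. simpl. rewrite gmul1r. reflexivity. Qed.

End GroupLaws.

Ltac group_simpl :=
  repeat progress rewrite ?ginvM, ?ginvK, ?ginv1, ?gmulA, ?gmulVl, ?gmulV, ?gmul1l, ?gmul1r,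
    ?gmulK, ?gmulKV.

Section Commutation.
Context {G : group}.
Implicit Types A a x y : G.

Lemma gcommute_gpow x a k : gcommute x a -> gcommute x (gpow a k).
Proof.
  unfold gcommute. intro h. induction k as [|k IH]; simpl.
  - rewrite gmul1l, gmul1r. reflexivity.
  - rewrite gmulA, h, <- gmulA, IH, gmulA. reflexivity.
Qed.

Lemma gcommute_mul_of_sq x y :
  gcommute x (gpow y 2) -> gcommute (gpow x 2) y -> gcommute (x · y) (y · x).
Proof.
  unfold gcommute. rewrite !gpow2. intros hy hx.
  transitivity (x · (y · y) · x); [group_simpl; reflexivity |].
  rewrite hy. transitivity (y · (y · (x · x))); [group_simpl; reflexivity |].
  rewrite <- hx. group_simpl. reflexivity.
Qed.

Lemma conjpowM A x y k : conjpow A (x · y) k = conjpow A x k · conjpow A y k.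
Proof. unfold conjpow. group_simpl. reflexivity. Qed.

Lemma conjpow_id A x k : gcommute x A -> conjpow A x k = x.
Proof.
  intro h. unfold conjpow. rewrite (gcommute_gpow x A k h). group_simpl. reflexivity.
Qed.

Lemma conjpowS A x k : conjpow A x (S k) = conjpow A (A⁻¹ · x · A) k.
Proof. unfold conjpow. simpl gpow. group_simpl. reflexivity. Qed.

Lemma conjpow_sq A x k : gcommute (x · x) A -> gpow (conjpow A x k) 2 = gpow x 2.
Proof. intro h. rewrite !gpow2, <- conjpowM, conjpow_id by exact h. reflexivity. Qed.

End Commutation.

Definition oriented {G : group} (m : nat) (S : nat -> G) (a b : G) : Prop :=
  forall i, i < m -> S i · S (i + 1) = a /\ S (i + 1) · S i = b.

Section Chains.
Context {G : group}.
Implicit Types (S T : nat -> G) (a b : G).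

Lemma chain_noncommuting m S : is_chain m S -> 2 <= m -> S 0 · S 1 <> S 1 · S 0.
Proof.
  intros [_ [_ [hne2 hpair]]] hm hc.
  destruct (hpair 1 ltac:(lia)) as [[h12 | h12] _]; simpl in h12;
    apply (hne2 0 ltac:(lia)), (gmul_cancel_l (S 1)); simpl; congruence.
Qed.

Lemma chain_oriented m S :
  is_chain m S -> S 0 · S 1 <> S 1 · S 0 -> oriented m S (S 0 · S 1) (S 1 · S 0).
Proof.
  intros [_ [_ [hne2 hpair]]] hab i. induction i as [|i IH]; intro hi.
  - split; reflexivity.
  - destruct (IH ltac:(lia)) as [_ IHb].
    replace (Datatypes.S i) with (i + 1) by lia. replace (i + 1 + 1) with (i + 2) by lia.
    destruct (hpair (i + 1) ltac:(lia)) as [hfwd [_ [_ hb]]].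
    replace (i + 1 + 1) with (i + 2) in hfwd, hb by lia.
    assert (hA : S (i + 1) · S (i + 2) = S 0 · S 1).
    { destruct hfwd as [h | h]; [exact h |].
      exfalso. apply (hne2 i ltac:(lia)), (gmul_cancel_l (S (i + 1))).
      rewrite IHb, h. reflexivity. }
    split; [exact hA |].
    destruct hb as [h | h]; [congruence | symmetry; exact h].
Qed.

Lemma oriented_chain m S a b :
  1 <= m -> a <> b -> oriented m S a b -> is_chain m S.
Proof.
  intros hm hab hor. destruct (hor 0 hm) as [ha hb]. simpl in ha, hb.
  split; [exact hm |]. split; [| split].
  - intros i hi e. destruct (hor i ltac:(lia)) as [hi1 hi2].
    apply hab. rewrite <- hi1, <- hi2, e. reflexivity.
  - intros i hi e. destruct (hor i ltac:(lia)) as [hi1 _].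
    destruct (hor (i + 1) ltac:(lia)) as [_ hi2].
    replace (i + 1 + 1) with (i + 2) in hi2 by lia.
    apply hab. rewrite <- hi1, <- hi2, e. reflexivity.
  - intros i hi. destruct (hor i hi) as [hi1 hi2].
    rewrite hi1, hi2, ha, hb. unfold pair_eq. tauto.
Qed.

Lemma oriented_intertwines m S a b i :
  oriented m S a b -> i < m -> a · S i = S i · b.
Proof.
  intros hor hi. destruct (hor i hi) as [ha hb].
  rewrite <- ha, <- hb. group_simpl. reflexivity.
Qed.

Lemma seq_eq_of_mul_succ m S T a :
  S 0 = T 0 ->
  (forall i, i < m -> S i · S (i + 1) = a) ->
  (forall i, i < m -> T i · T (i + 1) = a) ->
  forall i, i <= m -> S i = T i.
Proof.
  intros h0 hS hT i. induction i as [|i IH]; intro hi; [exact h0 |].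
  replace (Datatypes.S i) with (i + 1) by lia.
  apply (gmul_cancel_l (S i)). rewrite hS by lia. rewrite IH by lia.
  symmetry. apply hT. lia.
Qed.

Lemma oriented_sq_commute m S P Q :
  3 <= m -> oriented m S (P · Q) (Q · P) -> S 1 = Q ->
  gcommute P (gpow Q 2) /\ gcommute (gpow P 2) Q.
Proof.
  intros hm hor e1. unfold gcommute. rewrite !gpow2.
  assert (hQ : P · Q · Q = Q · Q · P).
  { pose proof (oriented_intertwines m S _ _ 1 hor ltac:(lia)) as h.
    rewrite e1, gmulA in h. exact h. }
  assert (hS2 : S 2 = Q⁻¹ · (P · Q)).
  { destruct (hor 1 ltac:(lia)) as [h _]. rewrite e1 in h.
    rewrite <- h. group_simpl. reflexivity. }
  pose proof (oriented_intertwines m S _ _ 2 hor ltac:(lia)) as h.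
  rewrite hS2 in h.
  split; [group_simpl; exact hQ |].
  transitivity (P · Q · (Q⁻¹ · (P · Q))); [group_simpl; reflexivity |].
  rewrite h.
  transitivity (Q⁻¹ · (P · Q · Q) · P); [group_simpl; reflexivity |].
  rewrite hQ. group_simpl. reflexivity.
Qed.

End Chains.

Section StandardSequence.
Context {G : group} (P Q : G).

Lemma std_seq_even k : std_seq P Q (2 * k) = conjpow (P · Q) P k.
Proof.
  unfold std_seq. rewrite Nat.even_even, Nat.mul_comm, Nat.div_mul by lia. reflexivity.
Qed.

Lemma std_seq_odd k : std_seq P Q (2 * k + 1) = conjpow (P · Q) Q k.
Proof.
  unfold std_seq. rewrite Nat.even_odd, Nat.add_sub, Nat.mul_comm, Nat.div_mul by lia.
  reflexivity.
Qed.

Lemma std_seq_0 : std_seq P Q 0 = P.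
Proof. unfold std_seq, conjpow. simpl. group_simpl. reflexivity. Qed.

Lemma std_seq_1 : std_seq P Q 1 = Q.
Proof. unfold std_seq, conjpow. simpl. group_simpl. reflexivity. Qed.

Lemma std_seq_mul_succ i : std_seq P Q i · std_seq P Q (i + 1) = P · Q.
Proof.
  destruct (Nat.Even_or_Odd i) as [[k ->] | [k ->]].
  - rewrite std_seq_even, std_seq_odd, <- conjpowM. apply conjpow_id. reflexivity.
  - replace (2 * k + 1 + 1) with (2 * S k) by lia.
    rewrite std_seq_odd, std_seq_even, conjpowS, <- conjpowM.
    transitivity (conjpow (P · Q) (P · Q) k); [f_equal; group_simpl; reflexivity |].
    apply conjpow_id. reflexivity.
Qed.

Lemma std_seq_succ_mul i :
  gcommute P (gpow Q 2) -> gcommute (P · Q) (Q · P) ->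
  std_seq P Q (i + 1) · std_seq P Q i = Q · P.
Proof.
  intros hQ2 hAB. destruct (Nat.Even_or_Odd i) as [[k ->] | [k ->]].
  - rewrite std_seq_even, std_seq_odd, <- conjpowM. apply conjpow_id. symmetry. exact hAB.
  - replace (2 * k + 1 + 1) with (2 * S k) by lia.
    rewrite std_seq_odd, std_seq_even, conjpowS, <- conjpowM.
    transitivity (conjpow (P · Q) (Q · P) k); [f_equal | apply conjpow_id; symmetry; exact hAB].
    unfold gcommute in hQ2. rewrite gpow2 in hQ2.
    apply (gmul_cancel_l (P · Q)).
    transitivity (P · (P · (Q · Q))); [group_simpl; reflexivity |].
    rewrite hQ2. group_simpl. reflexivity.
Qed.

Lemma std_seq_oriented m :
  gcommute P (gpow Q 2) -> gcommute (gpow P 2) Q ->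
  oriented m (std_seq P Q) (P · Q) (Q · P).
Proof.
  intros hQ2 hP2 i _. split.
  - apply std_seq_mul_succ.
  - apply std_seq_succ_mul; [exact hQ2 | apply gcommute_mul_of_sq; assumption].
Qed.

Lemma std_seq_sq_even i :
  gcommute (gpow P 2) Q -> Nat.even i = true -> gpow (std_seq P Q i) 2 = gpow P 2.
Proof.
  unfold gcommute. intros hP2 hi. rewrite gpow2 in hP2.
  unfold std_seq. rewrite hi. apply conjpow_sq. unfold gcommute.
  transitivity (P · (P · P · Q)); [group_simpl; reflexivity |].
  rewrite hP2. group_simpl. reflexivity.
Qed.

Lemma std_seq_sq_odd i :
  gcommute P (gpow Q 2) -> Nat.odd i = true -> gpow (std_seq P Q i) 2 = gpow Q 2.
Proof.
  unfold gcommute. intros hQ2 hi. rewrite gpow2 in hQ2.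
  unfold std_seq. rewrite <- Nat.negb_odd, hi. apply conjpow_sq. unfold gcommute.
  transitivity (P · (Q · Q) · Q); [| group_simpl; reflexivity].
  rewrite hQ2. group_simpl. reflexivity.
Qed.

End StandardSequence.

Theorem theorem6p2 (G : group) (P Q : G) :
  (forall (m : nat) (S : nat -> G),
     3 <= m -> is_chain m S -> S 0 = P -> S 1 = Q ->
     gmul P Q <> gmul Q P /\
     gmul P (gpow Q 2) = gmul (gpow Q 2) P /\
     gmul (gpow P 2) Q = gmul Q (gpow P 2) /\
     (forall i, i <= m ->
        (Nat.even i = true ->
           S i = conjpow (gmul P Q) P (i / 2) /\ gpow (S i) 2 = gpow P 2) /\
        (Nat.odd i = true ->
           S i = conjpow (gmul P Q) Q ((i - 1) / 2) /\ gpow (S i) 2 = gpow Q 2)))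
  /\
  (gmul P Q <> gmul Q P ->
   gmul P (gpow Q 2) = gmul (gpow Q 2) P ->
   gmul (gpow P 2) Q = gmul Q (gpow P 2) ->
   forall m : nat, 3 <= m ->
     is_chain m (std_seq P Q) /\ std_seq P Q 0 = P /\ std_seq P Q 1 = Q /\
     (forall i, i <= m ->
        (Nat.even i = true -> gpow (std_seq P Q i) 2 = gpow P 2) /\
        (Nat.odd i = true -> gpow (std_seq P Q i) 2 = gpow Q 2))).
Proof.
  split.
  - intros m S hm hchain e0 e1.
    assert (hPQ : P · Q <> Q · P).
    { rewrite <- e0, <- e1. apply (chain_noncommuting m); [exact hchain | lia]. }
    assert (hor : oriented m S (P · Q) (Q · P)).
    { rewrite <- e0, <- e1. apply chain_oriented; [exact hchain | congruence]. }
    destruct (oriented_sq_commute m S P Q hm hor e1) as [hQ2 hP2].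
    assert (hstd : forall i, i <= m -> S i = std_seq P Q i).
    { apply (seq_eq_of_mul_succ m S (std_seq P Q) (P · Q)).
      - rewrite e0, std_seq_0. reflexivity.
      - intros i hi. exact (proj1 (hor i hi)).
      - intros i _. apply std_seq_mul_succ. }
    split; [exact hPQ | split; [exact hQ2 | split; [exact hP2 |]]].
    intros i hi. rewrite hstd by exact hi.
    split; intro hpar; split.
    + unfold std_seq. rewrite hpar. reflexivity.
    + exact (std_seq_sq_even P Q i hP2 hpar).
    + unfold std_seq. rewrite <- Nat.negb_odd, hpar. reflexivity.
    + exact (std_seq_sq_odd P Q i hQ2 hpar).
  - intros hPQ hQ2 hP2 m hm.
    split; [| split; [apply std_seq_0 | split; [apply std_seq_1 |]]].
    + apply (oriented_chain m _ (P · Q) (Q · P)); [lia | exact hPQ |].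
      apply std_seq_oriented; assumption.
    + intros i _. split; intro hpar; [apply std_seq_sq_even | apply std_seq_sq_odd]; assumption.
Qed.
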